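(* Let $\mathcal{A}$ be a finite alphabet, let $X$ be the set of finite sequences (words) over $\mathcal{A}$, and let $\alpha,\beta,\gamma\in\mathbb{R}$. Let $s:X\times X\to\mathbb{R}$ be the scoring function with letter scores $\alpha$ (match), $\beta$ (mismatch), $\gamma$ (insertion/deletion) described in the context. If $\alpha<\min\{\beta,\gamma,0\}$, $\beta\le 2\gamma$ and $\gamma>0$, then $s$ is a strong partial metric on $X$, i.e. for all $x,y,z\in X$: (i) $s(x,x)<s(x,y)$ whenever $x\neq y$; (ii) $s(x,y)=s(y,x)$; (iii) $s(x,y)\le s(x,z)+s(z,y)-s(z,z)$.
   Context: Adjoin a gap symbol $-\notin\mathcal{A}$ and set $\mathcal{A}^\star=\mathcal{A}\cup\{-\}$. An alignment $\mathcal{L}$ of two words $x,y\in X$ is obtained by inserting gap symbols into $x$ and $y$ so that both become sequences $\langle x_i\rangle_{i=1}^m$, $\langle y_i\rangle_{i=1}^m$ over $\mathcal{A}^\star$ of the same length $m$ (deleting the gaps recovers $x$ and $y$). Each position $i$ receives a score $h_{(\mathcal{L},i)}(x,y)$: $\gamma$ if exactly one of $x_i,y_i$ is $-$ (deletion or insertion); $\alpha$ if $x_i=y_i\in\mathcal{A}$ (match); $\beta$ if $x_i,y_i\in\mathcal{A}$ and $x_i\neq y_i$ (mismatch); $0$ if $x_i=y_i=-$ (relay). The score of the alignment is $h_\mathcal{L}(x,y)=\sum_{i=1}^m h_{(\mathcal{L},i)}(x,y)$, and the scoring function is $s(x,y)=\min\{h_\mathcal{L}(x,y)\mid \mathcal{L}\text{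 an alignment of }x\text{ and }y\}$. *)

From HB Require Import structures.
From mathcomp Require Import all_boot all_order all_algebra.
From mathcomp Require Import all_classical all_reals.
Set Implicit Arguments. Unset Strict Implicit. Unset Printing Implicit Defensive.
Import Order.TTheory GRing.Theory Num.Theory.
Local Open Scope ring_scope.
Local Open Scope classical_set_scope.

(* Words over the alphabet A are [seq A].  The gap symbol is modelled by
   [None] in [option A] (so A* = option A, gap = None). *)

Definition alignment (A : eqType) := seq (option A * option A).

Definition is_alignment (A : eqType) (L : alignment A) (x y : seq A) : Prop :=
  pmap id (map fst L) = x /\ pmap id (map snd L) = y.

Definition col_score (R : numDomainType) (A : eqType) (al be ga : R)
  (c : option A * option A) : R :=
  match c with
  | (None, None) => 0                              (* relay *)
  | (Some _, None) | (None, Some _) => ga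
  | (Some a, Some b) => if a == b then al else be
  end.

Definition align_score (R : numDomainType) (A : eqType) (al be ga : R)
  (L : alignment A) : R :=
  \sum_(c <- L) col_score al be ga c.

(* s(x,y) = min { h_L(x,y) | L an alignment of x and y } (taken as the
   infimum of this set, which is the minimum whenever it is attained) *)
Definition align_dist (R : realType) (A : eqType) (al be ga : R)
  (x y : seq A) : R :=
  inf [set align_score al be ga L | L in [set L : alignment A | is_alignment L x y]].

Definition strong_partial_metric (R : numDomainType) (X : eqType)
  (s : X -> X -> R) : Prop :=
  (forall x y, x != y -> s x x < s x y) /\
  (forall x y, s x y = s y x) /\
  (forall x y z, s x y <= s x z + s z y - s z z).

From HB Require Import structures.
From mathcomp Require Import all_boot all_order all_algebra.
From mathcomp Require Import all_classical all_reals.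
From mathcomp Require Import lra.
Import Order.TTheory GRing.Theory Num.Theory.
Local Open Scope ring_scope.
Local Open Scope classical_set_scope.

(* The infimum defining s is attained, as it is computed by the
   Needleman-Wunsch recursion; so all three properties may be checked on
   optimal alignments.  A column scores at least alpha when its top entry is a
   letter and at least 0 otherwise, with equality exactly for matches and
   relays; summing gives s(x,x) = alpha |x| and the strict inequality (i).
   Transposing every column gives (ii).  For (iii), optimal alignments of x
   with z and of z with y are glued along the letters of z; each glued column
   satisfies h(a,b) + alpha <= h(a,c) + h(c,b), and summing over the |z|
   letters of z gives s(x,y) + s(z,z) <= s(x,z) + s(z,y). *)

Lemma inf_eq_min (R : realType) (E : set R) (m : R) :
  E m -> lbound E m -> inf E = m.
Proof.
move=> Em lbm; apply/le_anti/andP; split.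
- by apply: ge_inf => //; exists m.
- by apply: lb_le_inf => //; exists m.
Qed.

Section Alignments.
Variables (R : realType) (A : eqType) (al be ga : R).

Local Notation col := (@col_score R A al be ga).
Local Notation score := (@align_score R A al be ga).
Local Notation dist := (@align_dist R A al be ga).

Definition upper (L : alignment A) : seq A := pmap id (map fst L).
Definition lower (L : alignment A) : seq A := pmap id (map snd L).

Lemma score_nil : score [::] = 0.
Proof. by rewrite /align_score big_nil. Qed.

Lemma score_cons c L : score (c :: L) = col c + score L.
Proof. by rewrite /align_score big_cons. Qed.

(* [nw_row a f] is the row of the table for [a :: x], given the row [f] of [x]. *)
Fixpoint nw_row (a : A) (f : seq A -> R) (y : seq A) : R :=
  if y is b :: y' then
    Num.min (Num.min (col (Some a, Some b) + f y') (ga + f y))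
            (ga + nw_row a f y')
  else ga + f [::].

Fixpoint nw (x : seq A) : seq A -> R :=
  if x is a :: x' then nw_row a (nw x') else fun y => ga *+ size y.

Lemma nw_match a b x y : nw (a :: x) (b :: y) <= col (Some a, Some b) + nw x y.
Proof. by rewrite /= !ge_min le_refl. Qed.

Lemma nw_delete a x y : nw (a :: x) y <= ga + nw x y.
Proof. by case: y => [|b y] //=; rewrite !ge_min le_refl orbT. Qed.

Lemma nw_insert b x y : nw x (b :: y) <= ga + nw x y.
Proof. by case: x => [|a x] /=; rewrite ?mulrS // ge_min le_refl orbT. Qed.

Lemma nw_le_score L : nw (upper L) (lower L) <= score L.
Proof.
elim: L => [|[[a|] [b|]] L IH]; rewrite ?score_nil ?score_cons //.
- by apply: le_trans (nw_match _ _ _ _) _; rewrite lerD2l.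
- by apply: le_trans (nw_delete _ _ _) _; rewrite lerD2l.
- by apply: le_trans (nw_insert _ _ _) _; rewrite lerD2l.
- by rewrite add0r.
Qed.

Lemma min_ind (P : R -> Prop) (p q : R) : P p -> P q -> P (Num.min p q).
Proof. by rewrite /Order.min; case: ifP. Qed.

Definition ocons (o : option A) (s : seq A) : seq A :=
  if o is Some a then a :: s else s.

Lemma is_alignment_cons o1 o2 {L : alignment A} {x y : seq A} :
  is_alignment L x y -> is_alignment ((o1, o2) :: L) (ocons o1 x) (ocons o2 y).
Proof. by case: o1 o2 => [?|] [?|] [xE yE]; split; rewrite /= ?xE ?yE. Qed.

Lemma nw_attained x y : exists2 L, is_alignment L x y & score L = nw x y.
Proof.
have step o1 o2 x' y' r : (exists2 L, is_alignment L x' y' & score L = r) ->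
    exists2 L, is_alignment L (ocons o1 x') (ocons o2 y')
             & score L = col (o1, o2) + r.
  move=> [L aL <-]; exists ((o1, o2) :: L); last exact: score_cons.
  exact: is_alignment_cons.
elim: x y => [|a x IHx] y.
  elim: y => [|b y IHy]; first by exists [::]; rewrite ?score_nil.
  by rewrite /= mulrS; exact: (step None (Some b) [::] y).
elim: y => [|b y IHy]; first exact: (step (Some a) None x [::]).
pose P r := exists2 L, is_alignment L (a :: x) (b :: y) & score L = r.
by apply: (@min_ind P); [apply: (@min_ind P)|];
  [exact: (step (Some a) (Some b) x y) | exact: (step (Some a) None x (b :: y))
  | exact: (step None (Some b) (a :: x) y)].
Qed.

Lemma align_dist_nw x y : dist x y = nw x y.
Proof.
apply: inf_eq_min; first by have [L aL <-] := nw_attained x y; exists L.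
by move=> _ [L [<- <-] <-]; exact: nw_le_score.
Qed.

Lemma align_dist_le {L : alignment A} {x y : seq A} :
  is_alignment L x y -> dist x y <= score L.
Proof. by move=> [<- <-]; rewrite align_dist_nw; exact: nw_le_score. Qed.

Lemma align_dist_attained x y : exists2 L, is_alignment L x y & score L = dist x y.
Proof. by rewrite align_dist_nw; exact: nw_attained. Qed.

Lemma col_swap c : col (swap_pair c) = col c.
Proof. by case: c => [[a|] [b|]] //=; rewrite eq_sym. Qed.

Lemma is_alignment_swap (L : alignment A) (x y : seq A) :
  is_alignment L x y -> is_alignment (map swap_pair L) y x.
Proof. by move=> [xE yE]; split; rewrite -map_comp. Qed.

Lemma score_swap L : score (map swap_pair L) = score L.
Proof. by rewrite /align_score big_map; apply: eq_bigr => c _; exact: col_swap. Qed.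

Lemma align_dist_sym x y : dist x y = dist y x.
Proof.
have sub x' y' : [set score L | L in [set L : alignment A | is_alignment L x' y']] `<=`
                 [set score L | L in [set L : alignment A | is_alignment L y' x']].
  move=> _ [L aL <-]; exists (map swap_pair L); last exact: score_swap.
  exact: is_alignment_swap.
by rewrite /align_dist; congr inf; apply/seteqP; split; exact: sub.
Qed.

Definition diag_alignment (x : seq A) : alignment A := [seq (Some a, Some a) | a <- x].

Section Metric.
Hypotheses (al_be : al < be) (al_ga : al < ga) (ga_gt0 : 0 < ga).

Lemma col_leif c : al *+ isSome c.1 <= col c ?= iff (c.1 == c.2).
Proof.
apply/leifP; case: c => [[a|] [b|]] //=; rewrite ?mulr0n ?eqxx //.
by rewrite inj_eq; [case: eqP|exact: Some_inj].
Qed.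

Lemma score_leif L : al *+ size (upper L) <= score L ?= iff all (fun c => c.1 == c.2) L.
Proof.
elim: L => [|c L IH]; first by rewrite score_nil; apply/leifP; rewrite /= mulr0n.
rewrite score_cons /=; have := leifD (col_leif c) IH.
by case: c => [[a|] b]; rewrite /= ?mulrS ?mulr0n ?addr0 ?add0r => leL; exact: leL.
Qed.

Lemma upper_eq_lower L : all (fun c => c.1 == c.2) L -> upper L = lower L.
Proof. by move=> /allP eqL; congr pmap; apply/eq_in_map => c /eqL /eqP. Qed.

Lemma score_leif_eq L : all (fun c => c.1 == c.2) L -> score L = al *+ size (upper L).
Proof. by move=> eqL; apply/esym/eqP; rewrite (score_leif L).2. Qed.

Lemma align_dist_diag x : dist x x = al *+ size x.
Proof.
have aD : is_alignment (diag_alignment x) x x.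
  by split; rewrite /diag_alignment; elim: x => //= a x ->.
have eqD : all (fun c => c.1 == c.2) (diag_alignment x).
  by rewrite all_map; apply/allP => a _ /=; rewrite eqxx.
apply/le_anti/andP; split.
- apply: le_trans (align_dist_le aD) _.
  by case: aD => xE _; rewrite score_leif_eq // /upper xE.
- have [L [<- _] <-] := align_dist_attained x x; exact: score_leif.
Qed.

Lemma align_dist_diag_lt x y : x != y -> dist x x < dist x y.
Proof.
have [L [<- <-] <-] := align_dist_attained x y => neqL.
rewrite align_dist_diag lt_neqAle (score_leif L).2 (score_leif L) andbT.
by apply: contra neqL => /upper_eq_lower/eqP.
Qed.

Lemma al_le_match a b : al <= col (Some a, Some b).
Proof. by rewrite /=; case: eqP => // _; exact: ltW. Qed.

Lemma col_glue a b c : col (a, b) + al <= col (a, Some c) + col (Some c, b).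
Proof.
case: a b => [a|] [b|] /=.
- have [<-|neq_ab] := eqVneq a b; first by apply: lerD; exact: al_le_match.
  have [->|_] := eqVneq c a; first by rewrite (negPf neq_ab) addrC.
  by rewrite lerD2l; case: eqP => // _; exact: ltW.
- by rewrite addrC lerD2r; exact: al_le_match.
- by rewrite lerD2l; exact: al_le_match.
- by rewrite add0r ltW // (lt_le_trans al_ga) // lerDl ltW.
Qed.

Lemma glue_alignments L1 L2 : lower L1 = upper L2 ->
  exists2 L, is_alignment L (upper L1) (lower L2)
           & score L + al *+ size (lower L1) <= score L1 + score L2.
Proof.
elim: L1 L2 => [|[a [c|]] L1 IH] L2 /=.
- move=> uL2; exists L2; first by split.
  by rewrite score_nil mulr0n addr0 add0r.
- elim: L2 => [|[[c'|] b] L2 IHL2] //= => [[<-] /IH[L aL le_L] | /IHL2[L aL le_L]].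
  + exists ((a, b) :: L); first exact: is_alignment_cons.
    move: le_L (col_glue a b c); rewrite !score_cons mulrS; lra.
  + exists ((None, b) :: L); first exact: (is_alignment_cons None b aL).
    by move: le_L; rewrite !score_cons; lra.
- move=> /IH[L aL le_L]; exists ((a, None) :: L); first exact: is_alignment_cons.
  by move: le_L; rewrite !score_cons; lra.
Qed.

Lemma align_dist_triangle x y z : dist x y <= dist x z + dist z y - dist z z.
Proof.
have [L1 [<- zE] <-] := align_dist_attained x z.
have [L2 [zE' <-] <-] := align_dist_attained z y.
have [L aL le_L] := glue_alignments _ _ (etrans zE (esym zE')).
rewrite align_dist_diag -zE lerBrDr; apply: le_trans le_L.
by rewrite lerD2r; exact: align_dist_le aL.
Qed.

End Metric.

End Alignments.

Theorem lemma2p2 (R : realType) (A : finType) (al be ga : R) :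
  al < Num.min be (Num.min ga 0) -> be <= 2 * ga -> 0 < ga ->
  strong_partial_metric (@align_dist R A al be ga).
Proof.
rewrite !lt_min => /and3P[al_be al_ga _] _ ga_gt0.
split; [|split].
- exact: align_dist_diag_lt.
- exact: align_dist_sym.
- exact: align_dist_triangle.
Qed.
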